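(* Let $\omega$ be a circle with center $O$ and $\xi$ an ellipse with center $O$ lying inside $\omega$. Let $(u_1,\dots,u_n)$ be a Poncelet $n$-gon for the pair $(\omega,\xi)$. Then for each $k$, the sum of squared lengths of its $k$-diagonals, $\sum_{i=1}^n|u_{i+k}-u_i|^2$, is constant in the Poncelet family of $n$-gons containing $(u_1,\dots,u_n)$.
   Context: Indices are mod $n$. A Poncelet $n$-gon for a pair of conics $(C,D)$, $D$ inside $C$, is a closed polygon with all vertices on $C$ and all sides tangent to $D$. By the Poncelet porism, if one such closed $n$-gon exists, then starting from any point of $C$ and successively drawing tangent lines to $D$ (in the same rotational sense) produces a closed $n$-gon; the Poncelet family is this continuous 1-parameter family. *)

From Stdlib Require Import Reals Lra Lia List.
Open Scope R_scope.

Definition pt := (R * R)%type.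

Definition dist2 (p q : pt) : R :=
  (fst p - fst q) ^ 2 + (snd p - snd q) ^ 2.

Definition on_circle (O : pt) (r : R) (p : pt) : Prop := dist2 p O = r ^ 2.

(* ellipse with center O, semi-axes a, b, first axis along the unit
   vector (c, s) (second axis along (-s, c)) *)
Definition on_ellipse (O : pt) (a b c s : R) (p : pt) : Prop :=
  let dx := fst p - fst O in
  let dy := snd p - snd O in
  (c * dx + s * dy) ^ 2 / a ^ 2 + (- s * dx + c * dy) ^ 2 / b ^ 2 = 1.

Definition on_line (p q x : pt) : Prop :=
  (fst x - fst p) * (snd q - snd p) = (snd x - snd p) * (fst q - fst p).

(* the line through distinct points p, q is tangent to the ellipse:
   it meets the (convex) ellipse in exactly one point *)
Definition tangent_line (O : pt) (a b c s : R) (p q : pt) : Prop :=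
  p <> q /\ exists! x : pt, on_ellipse O a b c s x /\ on_line p q x.

(* Poncelet n-gon (u_0, ..., u_{n-1}), indices mod n, for the pair
   (circle (O,r), ellipse): vertices on the circle, every side tangent to
   the ellipse, and consecutive sides are distinct tangent lines
   (the polygon never backtracks, i.e. u_{i+2} <> u_i). *)
Definition poncelet_ngon (O : pt) (r : R) (O' : pt) (a b c s : R)
    (n : nat) (u : nat -> pt) : Prop :=
  (3 <= n)%nat /\
  forall i : nat, (i < n)%nat ->
    on_circle O r (u i) /\
    tangent_line O' a b c s (u i) (u ((i + 1) mod n)) /\
    u ((i + 2) mod n) <> u i.

Definition diag_sum (n k : nat) (u : nat -> pt) : R :=
  fold_right Rplus 0 (map (fun i => dist2 (u ((i + k) mod n)) (u i)) (seq 0 n)).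

(* After a rigid motion and a scaling by [1/r], the circle is the unit circle,
   the ellipse axes are the coordinate axes, and the chord [XY] touches the
   ellipse iff [p x1 y1 + q x2 y2 = e] with [p = r^2 - a^2 + b^2],
   [q = r^2 + a^2 - b^2], [e = a^2 + b^2 - r^2].  Solving for [Y] gives the
   Poncelet map, which lifts to a smooth angle map [N] with
   [N'(t) = rho (N t) / rho t], where [rho t ^ 2 = p^2 cos^2 t + q^2 sin^2 t - e^2]
   is affine in [sin^2 t].  Hence [sin (b - a) / (rho a + rho b)] is constant
   along the pairs [(t, N^k t)]: closing for one [t] forces [sin (N^n t - t) = 0]
   for every [t], so [sin^2 (N^j t)] is [n]-periodic in [j], and the derivative of
   [sum_j cos (N^(k+j) t - N^j t)], which is an affine function of the [k]-diagonal
   sum, telescopes to [0]. *)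

From Stdlib Require Import Reals Lra Lia List.
From Coquelicot Require Import Coquelicot.
Open Scope R_scope.

(* [lin_comb H c] proves [lhs = rhs] when [lhs - rhs = c * (u - v)] is a ring
   identity, where [H : u = v]; similarly for [lin_comb2] with two hypotheses. *)
Ltac lin_comb H c :=
  match type of H with ?u = ?v =>
    apply Rminus_diag_uniq; transitivity (c * (u - v));
    [ring | rewrite (Rminus_diag_eq _ _ H); ring]
  end.

Ltac lin_comb2 H1 c1 H2 c2 :=
  match type of H1 with ?u1 = ?v1 => match type of H2 with ?u2 = ?v2 =>
    apply Rminus_diag_uniq; transitivity (c1 * (u1 - v1) + c2 * (u2 - v2));
    [ring | rewrite (Rminus_diag_eq _ _ H1), (Rminus_diag_eq _ _ H2); ring]
  end end.

(** * The Poncelet correspondence on the unit circle *)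

Definition unit_pt (X : pt) : Prop := fst X ^ 2 + snd X ^ 2 = 1.

Definition conj_pt (X : pt) : pt := (fst X, - snd X).

Lemma unit_pt_conj X : unit_pt X -> unit_pt (conj_pt X).
Proof. unfold unit_pt, conj_pt; cbn [fst snd]. intros H; rewrite <- H; ring. Qed.

Lemma conj_ptK X : conj_pt (conj_pt X) = X.
Proof. destruct X; unfold conj_pt; cbn [fst snd]. f_equal. ring. Qed.

Definition admissible (p q e : R) : Prop := 0 < p /\ 0 < q /\ -p < e < p /\ -q < e < q.

Section Correspondence.

Variables p q e : R.
Hypothesis adm : admissible p q e.

(* The tangency condition for the chord [XY] of the unit circle, in the
   normalisation of [chord_tangent_of_tangent_line] below. *)
Definition chord_tangent (X Y : pt) : Prop := p * fst X * fst Y + q * snd X * snd Y = e.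

Definition cross (X Y : pt) : R := p * fst X * snd Y - q * snd X * fst Y.

Definition scaled_norm2 (X : pt) : R := p ^ 2 * fst X ^ 2 + q ^ 2 * snd X ^ 2.

Definition rho (X : pt) : R := sqrt (scaled_norm2 X - e ^ 2).

Definition next (X : pt) : pt :=
  ((e * p * fst X - rho X * q * snd X) / scaled_norm2 X,
   (e * q * snd X + rho X * p * fst X) / scaled_norm2 X).

Definition prev (X : pt) : pt :=
  ((e * p * fst X + rho X * q * snd X) / scaled_norm2 X,
   (e * q * snd X - rho X * p * fst X) / scaled_norm2 X).

Lemma sq_e_lt_scaled_norm2 X : unit_pt X -> e ^ 2 < scaled_norm2 X.
Proof.
  destruct adm as (Hp & Hq & Hep & Heq). destruct X as [x y].
  unfold unit_pt, scaled_norm2; cbn [fst snd]. intros Hu.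
  assert (e ^ 2 < p ^ 2) by nra. assert (e ^ 2 < q ^ 2) by nra.
  assert (e ^ 2 = e ^ 2 * x ^ 2 + e ^ 2 * y ^ 2) by (rewrite <- Rmult_plus_distr_l, Hu; ring).
  destruct (Rle_lt_dec (x ^ 2) 0); nra.
Qed.

Lemma scaled_norm2_pos X : unit_pt X -> 0 < scaled_norm2 X.
Proof. intros U. pose proof (sq_e_lt_scaled_norm2 X U). nra. Qed.

Lemma rho_sq X : unit_pt X -> rho X ^ 2 = scaled_norm2 X - e ^ 2.
Proof. intros U. apply pow2_sqrt. pose proof (sq_e_lt_scaled_norm2 X U). lra. Qed.

Lemma rho_pos X : unit_pt X -> 0 < rho X.
Proof. intros U. apply sqrt_lt_R0. pose proof (sq_e_lt_scaled_norm2 X U). lra. Qed.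

Lemma rho_conj X : rho (conj_pt X) = rho X.
Proof. unfold rho, scaled_norm2, conj_pt; cbn [fst snd]. f_equal. ring. Qed.

Lemma next_conj X : next (conj_pt X) = conj_pt (prev X).
Proof.
  unfold next, prev. rewrite rho_conj. unfold scaled_norm2, conj_pt; cbn [fst snd].
  replace ((- snd X) ^ 2) with (snd X ^ 2) by ring.
  f_equal; unfold Rdiv; ring.
Qed.

Lemma tangent_cases X Y : unit_pt X -> unit_pt Y -> chord_tangent X Y ->
  Y = next X \/ Y = prev X.
Proof.
  intros U V F. pose proof (rho_sq X U) as Hw. pose proof (scaled_norm2_pos X U) as Hm.
  destruct X as [x y], Y as [y1 y2].
  unfold unit_pt, chord_tangent, next, prev, scaled_norm2 in *; cbn [fst snd] in *.
  set (w := rho (x, y)) in *. set (t := p * x * y2 - q * y * y1).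
  assert (E1 : (p^2*x^2 + q^2*y^2) * y1 = e*p*x - t*q*y) by (unfold t; rewrite <- F; ring).
  assert (E2 : (p^2*x^2 + q^2*y^2) * y2 = e*q*y + t*p*x) by (unfold t; rewrite <- F; ring).
  (* Lagrange's identity for the vectors (p x, q y) and (y1, y2) *)
  assert (Et : t ^ 2 = w ^ 2).
  { rewrite Hw, <- F. unfold t.
    replace ((p*x*y2 - q*y*y1) ^ 2)
      with ((p^2*x^2 + q^2*y^2) * (y1^2 + y2^2) - (p*x*y1 + q*y*y2) ^ 2) by ring.
    rewrite V. ring. }
  assert (Ht : t = w \/ t = - w) by (apply Rsqr_eq; rewrite !Rsqr_pow2; exact Et).
  destruct Ht as [Ht | Ht]; [left | right]; f_equal;
    apply (Rmult_eq_reg_l (p^2*x^2 + q^2*y^2)); try lra;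
    [rewrite E1 | rewrite E2 | rewrite E1 | rewrite E2]; rewrite Ht; field; lra.
Qed.

Lemma next_unit X : unit_pt X -> unit_pt (next X).
Proof.
  intros U. pose proof (rho_sq X U) as Hw. pose proof (scaled_norm2_pos X U) as Hm.
  unfold unit_pt, next. cbn [fst snd]. set (m := scaled_norm2 X) in *. set (w := rho X) in *.
  assert (E : (e*p*fst X - w*q*snd X) ^ 2 + (e*q*snd X + w*p*fst X) ^ 2 = (e ^ 2 + w ^ 2) * m)
    by (unfold m, scaled_norm2; ring).
  replace (((e*p*fst X - w*q*snd X) / m) ^ 2 + ((e*q*snd X + w*p*fst X) / m) ^ 2)
    with (((e*p*fst X - w*q*snd X) ^ 2 + (e*q*snd X + w*p*fst X) ^ 2) / m ^ 2) by (field; lra).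
  rewrite E, Hw. field. lra.
Qed.

Lemma tangent_next X : unit_pt X -> chord_tangent X (next X).
Proof.
  intros U. pose proof (scaled_norm2_pos X U) as Hm.
  unfold chord_tangent, next; cbn [fst snd].
  field_simplify; [| lra]. unfold scaled_norm2 in *. field. lra.
Qed.

Lemma cross_next X : unit_pt X -> cross X (next X) = rho X.
Proof.
  intros U. pose proof (scaled_norm2_pos X U) as Hm.
  unfold cross, next; cbn [fst snd]. unfold scaled_norm2 in *. field. lra.
Qed.

Lemma cross_prev X : unit_pt X -> cross X (prev X) = - rho X.
Proof.
  intros U. pose proof (scaled_norm2_pos X U) as Hm.
  unfold cross, prev; cbn [fst snd]. unfold scaled_norm2 in *. field. lra.
Qed.

Lemma cross_next_back_neg X : unit_pt X -> cross (next X) X < 0.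
Proof.
  intros U. pose proof (rho_sq X U) as Hw. pose proof (rho_pos X U) as Hw0.
  pose proof (scaled_norm2_pos X U) as Hm. pose proof adm as (Hp & Hq & Hep & Heq).
  destruct X as [x y]. unfold unit_pt, cross, next, scaled_norm2 in *; cbn [fst snd] in *.
  set (w := rho (x, y)) in *. set (m := p^2*x^2 + q^2*y^2) in *.
  set (E := e * (q^2 - p^2) * x * y).
  assert (Hid : p * ((e*p*x - w*q*y) / m) * y - q * ((e*q*y + w*p*x) / m) * x
                = - (E + w * p * q) / m).
  { replace (p * ((e*p*x - w*q*y) / m) * y - q * ((e*q*y + w*p*x) / m) * x)
      with ((p * (e*p*x - w*q*y) * y - q * (e*q*y + w*p*x) * x) / m) by (field; lra).
    f_equal. unfold E. lin_comb U (- w * p * q). }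
  rewrite Hid. apply Rdiv_neg_pos; [| exact Hm].
  (* [E ^ 2 < (w p q) ^ 2], from [(q^2 - p^2)^2 x^2 y^2 = m (q^2 x^2 + p^2 y^2) - p^2 q^2] *)
  assert (Hk : (q^2 - p^2) ^ 2 * x^2 * y^2 = m * (q^2 * x^2 + p^2 * y^2) - p^2 * q^2)
    by (unfold m; lin_comb U (- p^2 * q^2 - x^2 * p^2 * q^2 - y^2 * p^2 * q^2)).
  assert (Hb : e^2 * (q^2 * x^2 + p^2 * y^2) < p^2 * q^2).
  { assert (e ^ 2 < p ^ 2) by nra. assert (e ^ 2 < q ^ 2) by nra.
    assert (e^2 * q^2 * x^2 <= p^2 * q^2 * x^2) by (apply Rmult_le_compat_r; nra).
    assert (e^2 * p^2 * y^2 <= q^2 * p^2 * y^2) by (apply Rmult_le_compat_r; nra).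
    destruct (Rle_lt_dec (x ^ 2) 0).
    - assert (e^2 * p^2 * y^2 < q^2 * p^2 * y^2) by (apply Rmult_lt_compat_r; nra). nra.
    - assert (e^2 * q^2 * x^2 < p^2 * q^2 * x^2) by (apply Rmult_lt_compat_r; nra). nra. }
  assert (HE : E ^ 2 < (w * p * q) ^ 2).
  { replace (E ^ 2) with (e ^ 2 * ((q^2 - p^2) ^ 2 * x^2 * y^2)) by (unfold E; ring).
    replace ((w * p * q) ^ 2) with (w ^ 2 * (p ^ 2 * q ^ 2)) by ring.
    rewrite Hk, Hw. nra. }
  assert (0 < w * p * q) by (repeat apply Rmult_lt_0_compat; lra).
  nra.
Qed.

Lemma prev_next X : unit_pt X -> prev (next X) = X.
Proof.
  intros U. pose proof (next_unit X U) as U'.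
  assert (F : chord_tangent (next X) X).
  { pose proof (tangent_next X U) as F. unfold chord_tangent in *. rewrite <- F. ring. }
  destruct (tangent_cases _ _ U' U F) as [H | H]; [| auto].
  exfalso. pose proof (cross_next _ U') as C. rewrite <- H in C.
  pose proof (cross_next_back_neg X U). pose proof (rho_pos _ U'). lra.
Qed.

Lemma next_prev X : unit_pt X -> next (prev X) = X.
Proof.
  intros U.
  replace (prev X) with (conj_pt (next (conj_pt X))) by (rewrite next_conj; apply conj_ptK).
  rewrite next_conj, prev_next, conj_ptK by (apply unit_pt_conj; exact U). reflexivity.
Qed.

Lemma cross_next_back X : unit_pt X -> cross (next X) X = - rho (next X).
Proof. intros U. rewrite <- (prev_next X U) at 2. apply cross_prev, next_unit, U. Qed.

Lemma next_ccw X : unit_pt X -> 0 < fst X * snd (next X) - snd X * fst (next X).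
Proof.
  intros U. pose proof (rho_sq X U) as Hw. pose proof (rho_pos X U) as Hw0.
  pose proof (scaled_norm2_pos X U) as Hm. pose proof adm as (Hp & Hq & Hep & Heq).
  destruct X as [x y]. unfold unit_pt, next, scaled_norm2 in *; cbn [fst snd] in *.
  set (w := rho (x, y)) in *. set (m := p^2*x^2 + q^2*y^2) in *.
  set (L := p * x^2 + q * y^2). set (E := e * (q - p) * x * y).
  replace (x * ((e*q*y + w*p*x) / m) - y * ((e*p*x - w*q*y) / m)) with ((E + w * L) / m)
    by (unfold E, L; field; lra).
  apply Rdiv_lt_0_compat; [| exact Hm].
  (* [L] is a convex combination of [p] and [q], both larger than [|e|] *)
  assert (HL : e ^ 2 < L ^ 2 /\ 0 < L).
  { assert (0 <= x ^ 2) by nra. assert (0 <= y ^ 2) by nra.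
    destruct (Rle_lt_dec p q).
    - assert (p <= L) by (unfold L; assert (0 <= (q - p) * y ^ 2) by nra; nra). nra.
    - assert (q <= L) by (unfold L; assert (0 <= (p - q) * x ^ 2) by nra; nra). nra. }
  assert (Hk : (q - p) ^ 2 * x^2 * y^2 = m - L ^ 2)
    by (unfold m, L; lin_comb U (p^2 * x^2 + q^2 * y^2)).
  assert (HE : E ^ 2 < (w * L) ^ 2).
  { replace (E ^ 2) with (e ^ 2 * ((q - p) ^ 2 * x^2 * y^2)) by (unfold E; ring).
    replace ((w * L) ^ 2) with (w ^ 2 * L ^ 2) by ring.
    rewrite Hk, Hw. nra. }
  assert (0 < w * L) by (apply Rmult_lt_0_compat; lra).
  nra.
Qed.

End Correspondence.

Definition sum_upto (n : nat) (F : nat -> R) : R := fold_right Rplus 0 (map F (seq 0 n)).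

Lemma sum_upto_S n F : sum_upto (S n) F = F 0%nat + sum_upto n (fun j => F (S j)).
Proof. unfold sum_upto. cbn [seq map fold_right]. rewrite <- seq_shift, map_map. reflexivity. Qed.

Lemma sum_upto_ext n F G : (forall j, (j < n)%nat -> F j = G j) -> sum_upto n F = sum_upto n G.
Proof.
  intros H. unfold sum_upto. f_equal. apply map_ext_in.
  intros j Hj. apply in_seq in Hj. apply H. lia.
Qed.

Lemma sum_upto_const n c : sum_upto n (fun _ => c) = INR n * c.
Proof. induction n as [| n IH]; rewrite ?sum_upto_S, ?IH, ?S_INR; cbn; ring. Qed.

Lemma sum_upto_minus n F G : sum_upto n (fun j => F j - G j) = sum_upto n F - sum_upto n G.
Proof. revert F G; induction n; intros; rewrite ?sum_upto_S, ?IHn; cbn; ring. Qed.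

Lemma sum_upto_scal n c F : sum_upto n (fun j => c * F j) = c * sum_upto n F.
Proof. revert F; induction n; intros; rewrite ?sum_upto_S, ?IHn; cbn; ring. Qed.

Lemma sum_upto_shift n F : sum_upto n (fun j => F (S j)) = sum_upto n F - F 0%nat + F n.
Proof.
  revert F; induction n; intros F; [cbn; ring |].
  rewrite !sum_upto_S, (IHn (fun j => F (S j))). ring.
Qed.

Lemma sum_upto_shift_periodic n k g : (forall j, g (n + j)%nat = g j) ->
  sum_upto n (fun j => g (k + j)%nat) = sum_upto n g.
Proof.
  revert g; induction k; intros g Hg; [reflexivity |].
  cbn [Nat.add].
  rewrite (IHk (fun i => g (S i))).
  - rewrite sum_upto_shift, <- (Hg 0%nat), Nat.add_0_r. ring.
  - intros j. rewrite <- Nat.add_succ_r. apply Hg.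
Qed.

Lemma is_derive_replace (f : R -> R) (x l l' : R) : is_derive f x l -> l = l' -> is_derive f x l'.
Proof. intros H ->. exact H. Qed.

Lemma is_derive_comp_R (f g : R -> R) x df dg :
  is_derive f (g x) df -> is_derive g x dg -> is_derive (fun t => f (g t)) x (dg * df).
Proof. intros Hf Hg. exact (is_derive_comp f g x df dg Hf Hg). Qed.

Lemma is_derive_sum_upto n (F : nat -> R -> R) dF x :
  (forall j, is_derive (F j) x (dF j)) ->
  is_derive (fun t => sum_upto n (fun j => F j t)) x (sum_upto n dF).
Proof.
  revert F dF; induction n; intros F dF H.
  - apply (is_derive_const (V := R_NormedModule) 0 x).
  - rewrite sum_upto_S.
    apply (is_derive_ext (fun t => F 0%nat t + sum_upto n (fun j => F (S j) t))).
    { intros t. rewrite sum_upto_S. reflexivity. }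
    apply (is_derive_plus (V := R_NormedModule)); [apply H |].
    apply (IHn (fun j => F (S j))). intros j. apply H.
Qed.

Lemma eq_of_derive_zero (f : R -> R) : (forall x, is_derive f x 0) -> forall a b, f a = f b.
Proof.
  intros H a b.
  destruct (MVT_abs f (fun _ => 0) a b) as [c [Hc _]].
  { intros c _. apply is_derive_Reals, H. }
  rewrite Rabs_R0, Rmult_0_l in Hc. apply Rabs_eq_0 in Hc. lra.
Qed.

(** * The Poncelet map on angles *)

Definition cis (t : R) : pt := (cos t, sin t).

Lemma unit_pt_cis t : unit_pt (cis t).
Proof. unfold unit_pt, cis; cbn [fst snd]. rewrite <- (sin2_cos2 t). unfold Rsqr. ring. Qed.

Lemma sin_sq_sub a b : sin b ^ 2 - sin a ^ 2 = sin (b - a) * sin (b + a).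
Proof.
  rewrite sin_minus, sin_plus. pose proof (unit_pt_cis a) as Ua. pose proof (unit_pt_cis b) as Ub.
  unfold unit_pt, cis in *; cbn [fst snd] in *. lin_comb2 Ua (- sin b ^ 2) Ub (sin a ^ 2).
Qed.

Lemma sin_cos_add a b : sin a * cos a + sin b * cos b = sin (a + b) * cos (b - a).
Proof.
  rewrite sin_plus, cos_minus. pose proof (unit_pt_cis a) as Ua. pose proof (unit_pt_cis b) as Ub.
  unfold unit_pt, cis in *; cbn [fst snd] in *. lin_comb2 Ua (- (sin b * cos b)) Ub (- (sin a * cos a)).
Qed.

Lemma cos_sin_2atan T c s : c ^ 2 + s ^ 2 = 1 -> 0 < 1 + c -> T = s / (1 + c) ->
  cos (2 * atan T) = c /\ sin (2 * atan T) = s.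
Proof.
  intros H1 H2 HT.
  assert (Hs : sqrt (1 + T²) ^ 2 = 1 + T ^ 2).
  { rewrite pow2_sqrt; unfold Rsqr; nra. }
  assert (Hs0 : sqrt (1 + T²) <> 0) by (apply Rgt_not_eq, sqrt_lt_R0; unfold Rsqr; nra).
  rewrite cos_2a, sin_2a, cos_atan, sin_atan.
  replace (1 / sqrt (1 + T²) * (1 / sqrt (1 + T²)) - T / sqrt (1 + T²) * (T / sqrt (1 + T²)))
    with ((1 - T ^ 2) / sqrt (1 + T²) ^ 2) by (field; auto).
  replace (2 * (T / sqrt (1 + T²)) * (1 / sqrt (1 + T²))) with (2 * T / sqrt (1 + T²) ^ 2)
    by (field; auto).
  rewrite Hs, HT.
  assert (E : (1 + c) ^ 2 + s ^ 2 = 2 * (1 + c)) by nra.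
  split.
  - replace ((1 - (s / (1 + c)) ^ 2) / (1 + (s / (1 + c)) ^ 2))
      with (((1 + c) ^ 2 - s ^ 2) / ((1 + c) ^ 2 + s ^ 2)) by (field; split; nra).
    rewrite E. replace ((1 + c) ^ 2 - s ^ 2) with (2 * c * (1 + c)) by nra. field. lra.
  - replace (2 * (s / (1 + c)) / (1 + (s / (1 + c)) ^ 2))
      with (2 * s * (1 + c) / ((1 + c) ^ 2 + s ^ 2)) by (field; split; nra).
    rewrite E. field. lra.
Qed.

Lemma unit_dot_cross X Y : unit_pt X -> unit_pt Y -> 0 < fst X * snd Y - snd X * fst Y ->
  (fst X * fst Y + snd X * snd Y) ^ 2 + (fst X * snd Y - snd X * fst Y) ^ 2 = 1 /\
  0 < 1 + (fst X * fst Y + snd X * snd Y).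
Proof.
  unfold unit_pt. intros U V C.
  assert (E : (fst X * fst Y + snd X * snd Y) ^ 2 + (fst X * snd Y - snd X * fst Y) ^ 2 = 1).
  { replace 1 with ((fst X ^ 2 + snd X ^ 2) * (fst Y ^ 2 + snd Y ^ 2)) by (rewrite U, V; ring).
    ring. }
  split; [exact E | nra].
Qed.

Section Angles.

Variables p q e : R.
Hypothesis adm : admissible p q e.

Definition rho_at (t : R) : R := rho p q e (cis t).

(* The tangent of half the angle from [cis t] to [next (cis t)], written out
   so that [auto_derive] can differentiate it. *)
Definition half_tan (t : R) : R :=
  let m := p ^ 2 * cos t ^ 2 + q ^ 2 * sin t ^ 2 in
  let n1 := (e * p * cos t - rho_at t * q * sin t) / m in
  let n2 := (e * q * sin t + rho_at t * p * cos t) / m in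
  (cos t * n2 - sin t * n1) / (1 + (cos t * n1 + sin t * n2)).

Definition next_angle (t : R) : R := t + 2 * atan (half_tan t).

Lemma cis_next_angle t : cis (next_angle t) = next p q e (cis t).
Proof.
  pose proof (unit_pt_cis t) as U. pose proof (next_unit p q e adm _ U) as V.
  destruct (unit_dot_cross _ _ U V (next_ccw p q e adm _ U)) as [D1 D2].
  destruct (cos_sin_2atan (half_tan t) _ _ D1 D2) as [Hc Hs]; [reflexivity |].
  unfold next_angle, cis at 1. rewrite cos_plus, sin_plus, Hc, Hs.
  unfold cis in *; cbn [fst snd] in *. destruct (next p q e (cos t, sin t)) as [n1 n2].
  unfold unit_pt in U, V; cbn [fst snd] in *. f_equal.
  - lin_comb U n1.
  - lin_comb U n2.
Qed.

Lemma rho_at_pos t : 0 < rho_at t.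
Proof. apply rho_pos, unit_pt_cis. exact adm. Qed.

Lemma rho_at_sq t : rho_at t ^ 2 = p ^ 2 * cos t ^ 2 + q ^ 2 * sin t ^ 2 - e ^ 2.
Proof. apply rho_sq, unit_pt_cis. exact adm. Qed.

Lemma rho_at_sq_sub a b : rho_at b ^ 2 - rho_at a ^ 2 = (q ^ 2 - p ^ 2) * (sin b ^ 2 - sin a ^ 2).
Proof.
  rewrite !rho_at_sq. pose proof (unit_pt_cis a) as Ua. pose proof (unit_pt_cis b) as Ub.
  unfold unit_pt, cis in *; cbn [fst snd] in *. lin_comb2 Ua (- p ^ 2) Ub (p ^ 2).
Qed.

Lemma is_derive_rho_at t : is_derive rho_at t ((q ^ 2 - p ^ 2) * sin t * cos t / rho_at t).
Proof.
  pose proof (rho_at_pos t) as H0. pose proof (sq_e_lt_scaled_norm2 p q e adm _ (unit_pt_cis t)) as H1.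
  unfold rho_at, rho, scaled_norm2, cis in *; cbn [fst snd] in *.
  auto_derive.
  - lra.
  - match goal with |- context [2 * sqrt ?u] =>
      replace u with (p ^ 2 * cos t ^ 2 + q ^ 2 * sin t ^ 2 - e ^ 2) by ring end.
    field. lra.
Qed.

Lemma ex_derive_next_angle t : ex_derive next_angle t.
Proof.
  pose proof (unit_pt_cis t) as U.
  pose proof (scaled_norm2_pos p q e adm _ U) as Hm.
  destruct (unit_dot_cross _ _ U (next_unit p q e adm _ U) (next_ccw p q e adm _ U)) as [_ D].
  unfold next, scaled_norm2, cis in Hm, D; cbn [fst snd] in Hm, D.
  change (rho p q e (cos t, sin t)) with (rho_at t) in D.
  unfold next_angle, half_tan. auto_derive.
  replace (p * (p * 1) * (cos t * (cos t * 1)) + q * (q * 1) * (sin t * (sin t * 1)))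
    with (p ^ 2 * cos t ^ 2 + q ^ 2 * sin t ^ 2) by ring.
  assert (ex_derive rho_at t) by (eexists; apply is_derive_rho_at).
  repeat split; auto; intro; lra.
Qed.

Lemma tangent_next_angle t :
  p * cos t * cos (next_angle t) + q * sin t * sin (next_angle t) = e.
Proof.
  pose proof (tangent_next p q e adm _ (unit_pt_cis t)) as F.
  rewrite <- cis_next_angle in F. exact F.
Qed.

Lemma is_derive_next_angle t : is_derive next_angle t (rho_at (next_angle t) / rho_at t).
Proof.
  pose proof (Derive_correct _ _ (ex_derive_next_angle t)) as D.
  set (d := Derive next_angle t) in *. set (N := next_angle t).
  (* differentiate [tangent_next_angle] implicitly *)
  assert (H1 : is_derive (fun t => p * cos t * cos (next_angle t) + q * sin t * sin (next_angle t)) t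
     ((- p * sin t * cos N + q * cos t * sin N) + d * (- p * cos t * sin N + q * sin t * cos N))).
  { auto_derive.
    - repeat split; exists d; exact D.
    - change (Derive (fun x => next_angle x) t) with d. fold N. ring. }
  assert (H2 : is_derive (fun t => p * cos t * cos (next_angle t) + q * sin t * sin (next_angle t)) t 0).
  { apply (is_derive_ext (fun _ => e)); [intros; rewrite tangent_next_angle; reflexivity |].
    apply (is_derive_const (V := R_NormedModule)). }
  pose proof (is_derive_unique _ _ _ H1) as E. rewrite (is_derive_unique _ _ _ H2) in E.
  pose proof (cross_next p q e adm _ (unit_pt_cis t)) as C.
  pose proof (cross_next_back p q e adm _ (unit_pt_cis t)) as B.
  rewrite <- cis_next_angle in C, B. fold N in C, B.
  change (rho p q e (cis t)) with (rho_at t) in C.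
  change (rho p q e (cis N)) with (rho_at N) in B.
  unfold cross, cis in C, B; cbn [fst snd] in C, B.
  replace (- p * sin t * cos N + q * cos t * sin N) with (rho_at N) in E by lra.
  replace (- p * cos t * sin N + q * sin t * cos N) with (- rho_at t) in E by lra.
  replace (rho_at N / rho_at t) with d; [exact D |].
  pose proof (rho_at_pos t). apply (Rmult_eq_reg_r (rho_at t)); [| lra].
  unfold Rdiv. rewrite Rmult_assoc, Rinv_l by lra. lra.
Qed.

Lemma is_derive_iter_next_angle j t :
  is_derive (Nat.iter j next_angle) t (rho_at (Nat.iter j next_angle t) / rho_at t).
Proof.
  pose proof (rho_at_pos t). induction j as [| j IH]; cbn [Nat.iter].
  - apply (is_derive_replace _ _ 1); [apply (is_derive_id (K := R_AbsRing)) |].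
    change (1 = rho_at t / rho_at t). field. lra.
  - eapply is_derive_replace.
    + apply (is_derive_comp_R next_angle (Nat.iter j next_angle)); [apply is_derive_next_angle | exact IH].
    + pose proof (rho_at_pos (Nat.iter j next_angle t)). simpl. field. lra.
Qed.

Definition chord_invariant (a b : R) : R := sin (b - a) / (rho_at a + rho_at b).

Lemma is_derive_chord_invariant (A B : R -> R) t w :
  is_derive A t (rho_at (A t) * w) -> is_derive B t (rho_at (B t) * w) ->
  is_derive (fun t => chord_invariant (A t) (B t)) t 0.
Proof.
  intros HA HB. unfold chord_invariant.
  pose proof (rho_at_pos (A t)). pose proof (rho_at_pos (B t)).
  auto_derive.
  - assert (ex_derive rho_at (A t)) by (eexists; apply is_derive_rho_at).
    assert (ex_derive rho_at (B t)) by (eexists; apply is_derive_rho_at).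
    repeat split; try (eexists; eassumption); auto; lra.
  - change (fun x : R => A x) with A. change (fun x : R => B x) with B.
    change (fun x : R => rho_at x) with rho_at.
    rewrite (is_derive_unique _ _ _ HA), (is_derive_unique _ _ _ HB),
      !(is_derive_unique _ _ _ (is_derive_rho_at _)).
    set (a := A t) in *. set (b := B t) in *. set (ra := rho_at a) in *. set (rb := rho_at b) in *.
    replace (b + - a) with (b - a) by ring.
    transitivity (w * (cos (b - a) * (rb ^ 2 - ra ^ 2)
                       - (q ^ 2 - p ^ 2) * sin (b - a) * (sin a * cos a + sin b * cos b))
                  / (ra + rb) ^ 2); [field; lra |].
    unfold ra, rb. rewrite rho_at_sq_sub, sin_sq_sub, sin_cos_add, (Rplus_comm a b).
    unfold Rdiv. ring.
Qed.

Lemma chord_invariant_iter k a b :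
  chord_invariant a (Nat.iter k next_angle a) = chord_invariant b (Nat.iter k next_angle b).
Proof.
  apply (eq_of_derive_zero (fun t => chord_invariant t (Nat.iter k next_angle t))). intros x.
  pose proof (rho_at_pos x).
  apply (is_derive_chord_invariant (fun t => t) (Nat.iter k next_angle) x (/ rho_at x)).
  - apply (is_derive_replace _ _ 1); [apply (is_derive_id (K := R_AbsRing)) | field; lra].
  - eapply is_derive_replace; [apply is_derive_iter_next_angle | field; lra].
Qed.

Lemma sin_iter_sub_eq0 n t0 : cis (Nat.iter n next_angle t0) = cis t0 ->
  forall t, sin (Nat.iter n next_angle t - t) = 0.
Proof.
  intros Hc t.
  assert (I : chord_invariant t (Nat.iter n next_angle t) = 0).
  { rewrite (chord_invariant_iter n t t0). unfold chord_invariant, cis in *.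
    injection Hc as H1 H2. rewrite sin_minus, H1, H2. unfold Rdiv. ring. }
  unfold chord_invariant, Rdiv in I. apply Rmult_integral in I as [I | I]; [exact I |].
  exfalso. revert I. apply Rinv_neq_0_compat.
  pose proof (rho_at_pos t). pose proof (rho_at_pos (Nat.iter n next_angle t)). lra.
Qed.

Lemma is_derive_cos_iter_sub i j t :
  is_derive (fun t => cos (Nat.iter i next_angle t - Nat.iter j next_angle t)) t
    (- sin (Nat.iter i next_angle t - Nat.iter j next_angle t)
     * ((rho_at (Nat.iter i next_angle t) - rho_at (Nat.iter j next_angle t)) / rho_at t)).
Proof.
  pose proof (is_derive_iter_next_angle i t) as Di. pose proof (is_derive_iter_next_angle j t) as Dj.
  auto_derive.
  - repeat split; eexists; eassumption.
  - change (fun x : R => Nat.iter i next_angle x) with (Nat.iter i next_angle).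
    change (fun x : R => Nat.iter j next_angle x) with (Nat.iter j next_angle).
    rewrite (is_derive_unique _ _ _ Di), (is_derive_unique _ _ _ Dj).
    unfold Rminus, Rdiv. ring.
Qed.

Definition diag_cos_sum (n k : nat) (t : R) : R :=
  sum_upto n (fun j => cos (Nat.iter (k + j) next_angle t - Nat.iter j next_angle t)).

Lemma diag_cos_sum_const n k t0 : cis (Nat.iter n next_angle t0) = cis t0 ->
  forall a b, diag_cos_sum n k a = diag_cos_sum n k b.
Proof.
  intros Hc. apply eq_of_derive_zero. intros x. unfold diag_cos_sum.
  set (N := fun j => Nat.iter j next_angle x).
  set (L := chord_invariant x (N k)).
  set (g := fun j => sin (N j) ^ 2).
  eapply is_derive_replace; [apply is_derive_sum_upto; intros j; apply is_derive_cos_iter_sub |].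
  (* each term is [-L (rho^2 (N (k + j)) - rho^2 (N j)) / rho x], and [rho^2] is affine in [sin^2] *)
  transitivity (sum_upto n (fun j => - L * (q ^ 2 - p ^ 2) / rho_at x * (g (k + j)%nat - g j))).
  - apply sum_upto_ext. intros j _. fold (N j) (N (k + j)%nat).
    assert (HL : chord_invariant (N j) (N (k + j)%nat) = L).
    { unfold N, L. rewrite Nat.iter_add. apply chord_invariant_iter. }
    unfold chord_invariant in HL.
    pose proof (rho_at_pos x). pose proof (rho_at_pos (N j)). pose proof (rho_at_pos (N (k + j)%nat)).
    replace (sin (N (k + j)%nat - N j)) with (L * (rho_at (N j) + rho_at (N (k + j)%nat)))
      by (rewrite <- HL; field; lra).
    transitivity (- L * (rho_at (N (k + j)%nat) ^ 2 - rho_at (N j) ^ 2) / rho_at x); [field; lra |].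
    unfold g. rewrite rho_at_sq_sub. field. lra.
  - rewrite sum_upto_scal, sum_upto_minus, sum_upto_shift_periodic; [ring |].
    intros j. unfold g, N. rewrite Nat.iter_add.
    apply Rminus_diag_uniq. rewrite sin_sq_sub, (sin_iter_sub_eq0 n t0 Hc). ring.
Qed.

End Angles.

(** * Normalising the circle and the ellipse *)

Definition pt_at (z w : pt) (t : R) : pt :=
  (fst z + t * (fst w - fst z), snd z + t * (snd w - snd z)).

Lemma dist2_eq0 z w : dist2 z w = 0 -> z = w.
Proof.
  unfold dist2. intros D.
  pose proof (pow2_ge_0 (fst z - fst w)). pose proof (pow2_ge_0 (snd z - snd w)).
  destruct z as [z1 z2], w as [w1 w2]; cbn [fst snd] in *. f_equal; nra.
Qed.

Lemma sq_dist_pos_of_neq X Y : X <> Y -> 0 < (fst Y - fst X) ^ 2 + (snd Y - snd X) ^ 2.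
Proof.
  intros Hne. pose proof (pow2_ge_0 (fst Y - fst X)). pose proof (pow2_ge_0 (snd Y - snd X)).
  destruct (Req_dec ((fst Y - fst X) ^ 2 + (snd Y - snd X) ^ 2) 0) as [D | D]; [| lra].
  exfalso. apply Hne, eq_sym, dist2_eq0. exact D.
Qed.

Lemma on_line_pt_at z w t : on_line z w (pt_at z w t).
Proof. unfold on_line, pt_at; cbn [fst snd]. ring. Qed.

Lemma pt_at_of_on_line z w x : z <> w -> on_line z w x -> exists t, x = pt_at z w t.
Proof.
  intros Hne H. unfold on_line in H. pose proof (sq_dist_pos_of_neq z w Hne) as HD.
  (* the orthogonal projection of [x] on the line *)
  exists (((fst x - fst z) * (fst w - fst z) + (snd x - snd z) * (snd w - snd z))
          / ((fst w - fst z) ^ 2 + (snd w - snd z) ^ 2)).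
  unfold pt_at. destruct x as [x1 x2]; cbn [fst snd] in *.
  set (d1 := fst w - fst z) in *. set (d2 := snd w - snd z) in *.
  f_equal; [apply (Rplus_eq_reg_r (- fst z)) | apply (Rplus_eq_reg_r (- snd z))];
    apply (Rmult_eq_reg_r (d1 ^ 2 + d2 ^ 2)); try lra; field_simplify; try lra.
  - lin_comb H d2.
  - lin_comb H (- d1).
Qed.

Lemma pt_at_inj z w t t' : z <> w -> pt_at z w t = pt_at z w t' -> t = t'.
Proof.
  intros Hne E. unfold pt_at in E. injection E as E1 E2.
  destruct (Req_dec (fst w) (fst z)) as [h1 | h1].
  - destruct (Req_dec (snd w) (snd z)) as [h2 | h2].
    + exfalso. apply Hne. destruct z, w; cbn [fst snd] in *. f_equal; auto.
    + apply (Rmult_eq_reg_r (snd w - snd z)); lra.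
  - apply (Rmult_eq_reg_r (fst w - fst z)); lra.
Qed.

Lemma quadratic_unique_root_disc al be ga t0 : al <> 0 ->
  al * t0 ^ 2 + be * t0 + ga = 0 -> (forall t, al * t ^ 2 + be * t + ga = 0 -> t = t0) ->
  be ^ 2 - 4 * al * ga = 0.
Proof.
  intros Hal E0 Uq.
  (* [- be / al - t0] is the other root *)
  assert (Ht1 : - be / al - t0 = t0).
  { apply Uq. replace (al * (- be / al - t0) ^ 2 + be * (- be / al - t0) + ga)
      with (al * t0 ^ 2 + be * t0 + ga) by (field; exact Hal). exact E0. }
  assert (Hbe : be = - 2 * al * t0).
  { assert (E : - be / al = 2 * t0) by lra.
    replace be with (- (- be / al) * al) by (field; exact Hal). rewrite E. ring. }
  assert (Hga : ga = - al * t0 ^ 2 - be * t0) by lra.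
  rewrite Hga, Hbe. ring.
Qed.

(* The ellipse [x^2/a^2 + y^2/b^2 = 1] seen in coordinates scaled by [1/r]. *)
Definition chart_ellipse (a b r : R) (X : pt) : Prop :=
  (r * fst X) ^ 2 / a ^ 2 + (r * snd X) ^ 2 / b ^ 2 = 1.

(* A line meeting the ellipse in exactly one point has zero discriminant. *)
Lemma chord_disc_of_unique_root a b r X Y t0 : 0 < a -> 0 < b -> 0 < r -> X <> Y ->
  chart_ellipse a b r (pt_at X Y t0) ->
  (forall t, chart_ellipse a b r (pt_at X Y t) -> t = t0) ->
  b ^ 2 * (fst Y - fst X) ^ 2 + a ^ 2 * (snd Y - snd X) ^ 2
  = r ^ 2 * (fst X * snd Y - snd X * fst Y) ^ 2.
Proof.
  intros Ha Hb Hr Hne E0 Uq. pose proof (sq_dist_pos_of_neq X Y Hne) as HD.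
  destruct X as [x1 x2], Y as [y1 y2].
  unfold chart_ellipse, pt_at in *; cbn [fst snd] in *.
  set (al := r^2 * ((y1 - x1) ^ 2 / a^2 + (y2 - x2) ^ 2 / b^2)).
  set (be := 2 * r^2 * (x1 * (y1 - x1) / a^2 + x2 * (y2 - x2) / b^2)).
  set (ga := r^2 * (x1 ^ 2 / a^2 + x2 ^ 2 / b^2) - 1).
  assert (Hal : 0 < al).
  { unfold al. apply Rmult_lt_0_compat; [nra |].
    assert (0 < a ^ 2) by nra. assert (0 < b ^ 2) by nra.
    replace ((y1 - x1) ^ 2 / a^2 + (y2 - x2) ^ 2 / b^2)
      with ((b ^ 2 * (y1 - x1) ^ 2 + a ^ 2 * (y2 - x2) ^ 2) / (a ^ 2 * b ^ 2)) by (field; lra).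
    apply Rdiv_lt_0_compat; [| nra].
    pose proof (pow2_ge_0 (y1 - x1)). pose proof (pow2_ge_0 (y2 - x2)).
    destruct (Rle_lt_dec ((y1 - x1) ^ 2) 0); [assert (0 < (y2 - x2) ^ 2) by lra |]; nra. }
  assert (HE : forall t, (r * (x1 + t * (y1 - x1))) ^ 2 / a ^ 2 + (r * (x2 + t * (y2 - x2))) ^ 2 / b ^ 2
                         = 1 + (al * t ^ 2 + be * t + ga))
    by (intros t; unfold al, be, ga; field; lra).
  assert (Hdisc : be ^ 2 - 4 * al * ga = 0).
  { apply (quadratic_unique_root_disc _ _ _ t0); [lra | |].
    - rewrite HE in E0. lra.
    - intros t Ht. apply Uq. rewrite HE, Ht. ring. }
  assert (K : be ^ 2 - 4 * al * ga = 4 * r^2 / (a^2 * b^2) *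
     (b^2 * (y1 - x1) ^ 2 + a^2 * (y2 - x2) ^ 2 - r^2 * (x1 * y2 - x2 * y1) ^ 2))
    by (unfold al, be, ga; field; split; lra).
  rewrite Hdisc in K.
  assert (0 < 4 * r^2 / (a^2 * b^2)) by (apply Rdiv_lt_0_compat; [nra | apply Rmult_lt_0_compat; nra]).
  assert (Z : b^2 * (y1 - x1) ^ 2 + a^2 * (y2 - x2) ^ 2 - r^2 * (x1 * y2 - x2 * y1) ^ 2 = 0)
    by (apply (Rmult_eq_reg_l (4 * r^2 / (a^2 * b^2))); lra).
  lra.
Qed.

Lemma chord_tangent_of_disc a b r X Y : unit_pt X -> unit_pt Y -> X <> Y ->
  b ^ 2 * (fst Y - fst X) ^ 2 + a ^ 2 * (snd Y - snd X) ^ 2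
  = r ^ 2 * (fst X * snd Y - snd X * fst Y) ^ 2 ->
  chord_tangent (r^2 - a^2 + b^2) (r^2 + a^2 - b^2) (a^2 + b^2 - r^2) X Y.
Proof.
  intros U V Hne Hk. pose proof (sq_dist_pos_of_neq X Y Hne) as HD.
  destruct X as [x1 x2], Y as [y1 y2].
  unfold unit_pt, chord_tangent in *; cbn [fst snd] in *.
  (* on the unit circle the tangency defect times [1 - X.Y = |Y - X|^2 / 2] is the discriminant *)
  assert (Hc : (1 - (x1 * y1 + x2 * y2)) * ((r^2 - a^2 + b^2) * x1 * y1 + (r^2 + a^2 - b^2) * x2 * y2
                                            - (a^2 + b^2 - r^2))
               = r^2 * (x1 * y2 - x2 * y1) ^ 2 - a^2 * (y2 - x2) ^ 2 - b^2 * (y1 - x1) ^ 2).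
  { lin_comb2 U (- y2 ^ 2 * r^2 - y2 ^ 2 * a^2 + y2 ^ 2 * b^2 - y1 ^ 2 * r^2 + a^2)
              V (- r^2 + x1 ^ 2 * a^2 + b^2 - x1 ^ 2 * b^2). }
  assert (Hd : 1 - (x1 * y1 + x2 * y2) = ((y1 - x1) ^ 2 + (y2 - x2) ^ 2) / 2) by (field_simplify; lra).
  rewrite <- Hk, Hd in Hc.
  assert (Z : ((y1 - x1) ^ 2 + (y2 - x2) ^ 2) / 2 * ((r^2 - a^2 + b^2) * x1 * y1
               + (r^2 + a^2 - b^2) * x2 * y2 - (a^2 + b^2 - r^2)) = 0) by lra.
  apply Rmult_integral in Z as [Z | Z]; lra.
Qed.

(* Coordinates in the frame of the ellipse axes centred at [O], scaled by [1 / r]. *)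
Definition chart (O : pt) (r c s : R) (z : pt) : pt :=
  ((c * (fst z - fst O) + s * (snd z - snd O)) / r,
   (- s * (fst z - fst O) + c * (snd z - snd O)) / r).

Lemma dist2_chart O r c s z w : 0 < r -> c ^ 2 + s ^ 2 = 1 ->
  dist2 z w = r ^ 2 * dist2 (chart O r c s z) (chart O r c s w).
Proof.
  intros Hr Hcs. unfold dist2, chart; cbn [fst snd].
  transitivity ((c ^ 2 + s ^ 2) * ((fst z - fst w) ^ 2 + (snd z - snd w) ^ 2));
    [rewrite Hcs; ring | field; lra].
Qed.

Lemma unit_pt_chart O r c s z : 0 < r -> c ^ 2 + s ^ 2 = 1 ->
  on_circle O r z -> unit_pt (chart O r c s z).
Proof.
  intros Hr Hcs H. unfold on_circle in H. rewrite (dist2_chart O r c s z O Hr Hcs) in H.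
  assert (HO : chart O r c s O = (0, 0)) by (unfold chart; f_equal; field; lra).
  rewrite HO in H. unfold unit_pt, dist2 in *; cbn [fst snd] in *.
  apply (Rmult_eq_reg_l (r ^ 2)); [lra | apply pow_nonzero; lra].
Qed.

Lemma chart_inj O r c s z w : 0 < r -> c ^ 2 + s ^ 2 = 1 ->
  chart O r c s z = chart O r c s w -> z = w.
Proof.
  intros Hr Hcs H. apply dist2_eq0.
  rewrite (dist2_chart O r c s z w Hr Hcs), H. unfold dist2. ring.
Qed.

Lemma chart_pt_at O r c s z w t : 0 < r ->
  chart O r c s (pt_at z w t) = pt_at (chart O r c s z) (chart O r c s w) t.
Proof. intros Hr. unfold chart, pt_at; cbn [fst snd]. f_equal; field; lra. Qed.

Lemma on_ellipse_chart O a b r c s z : 0 < r ->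
  on_ellipse O a b c s z <-> chart_ellipse a b r (chart O r c s z).
Proof.
  intros Hr. unfold on_ellipse, chart_ellipse, chart; cbn [fst snd].
  replace (r * ((c * (fst z - fst O) + s * (snd z - snd O)) / r))
    with (c * (fst z - fst O) + s * (snd z - snd O)) by (field; lra).
  replace (r * ((- s * (fst z - fst O) + c * (snd z - snd O)) / r))
    with (- s * (fst z - fst O) + c * (snd z - snd O)) by (field; lra).
  reflexivity.
Qed.

Lemma chord_tangent_of_tangent_line O a b r c s z w :
  0 < a -> 0 < b -> 0 < r -> c ^ 2 + s ^ 2 = 1 ->
  on_circle O r z -> on_circle O r w -> tangent_line O a b c s z w ->
  chord_tangent (r^2 - a^2 + b^2) (r^2 + a^2 - b^2) (a^2 + b^2 - r^2)
    (chart O r c s z) (chart O r c s w).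
Proof.
  intros Ha Hb Hr Hcs Cz Cw [Hne [x0 [[E0 L0] U0]]].
  destruct (pt_at_of_on_line z w x0 Hne L0) as [t0 ->].
  assert (Hne' : chart O r c s z <> chart O r c s w)
    by (intros H; apply Hne; exact (chart_inj O r c s z w Hr Hcs H)).
  apply chord_tangent_of_disc; try apply unit_pt_chart; auto.
  apply (chord_disc_of_unique_root a b r _ _ t0); auto.
  - rewrite <- chart_pt_at by exact Hr. apply on_ellipse_chart; assumption.
  - intros t Ht. rewrite <- chart_pt_at in Ht by exact Hr. apply on_ellipse_chart in Ht; [| exact Hr].
    apply (pt_at_inj z w); [exact Hne |]. symmetry. apply U0. split; [exact Ht | apply on_line_pt_at].
Qed.

Lemma admissible_of_inside O r a b c s : 0 < r -> 0 < a -> 0 < b -> c ^ 2 + s ^ 2 = 1 ->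
  (forall p : pt, on_ellipse O a b c s p -> dist2 p O < r ^ 2) ->
  admissible (r^2 - a^2 + b^2) (r^2 + a^2 - b^2) (a^2 + b^2 - r^2).
Proof.
  intros Hr Ha Hb Hcs Hin.
  (* the vertices [O + a (c, s)] and [O + b (-s, c)] lie on the ellipse *)
  assert (A : a ^ 2 < r ^ 2).
  { specialize (Hin (fst O + c * a, snd O + s * a)).
    unfold on_ellipse, dist2 in Hin; cbn [fst snd] in Hin.
    replace (c * (fst O + c * a - fst O) + s * (snd O + s * a - snd O)) with ((c^2 + s^2) * a) in Hin by ring.
    replace (- s * (fst O + c * a - fst O) + c * (snd O + s * a - snd O)) with 0 in Hin by ring.
    replace ((fst O + c * a - fst O) ^ 2 + (snd O + s * a - snd O) ^ 2) with ((c^2 + s^2) * a^2) in Hin by ring.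
    rewrite Hcs in Hin. rewrite <- (Rmult_1_l (_ ^ 2)). apply Hin. field. lra. }
  assert (B : b ^ 2 < r ^ 2).
  { specialize (Hin (fst O - s * b, snd O + c * b)).
    unfold on_ellipse, dist2 in Hin; cbn [fst snd] in Hin.
    replace (c * (fst O - s * b - fst O) + s * (snd O + c * b - snd O)) with 0 in Hin by ring.
    replace (- s * (fst O - s * b - fst O) + c * (snd O + c * b - snd O)) with ((c^2 + s^2) * b) in Hin by ring.
    replace ((fst O - s * b - fst O) ^ 2 + (snd O + c * b - snd O) ^ 2) with ((c^2 + s^2) * b^2) in Hin by ring.
    rewrite Hcs in Hin. rewrite <- (Rmult_1_l (_ ^ 2)). apply Hin. field. lra. }
  assert (0 < a ^ 2) by nra. assert (0 < b ^ 2) by nra.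
  unfold admissible. lra.
Qed.

Lemma steps_all_next_or_all_prev p q e (X : nat -> pt) : admissible p q e ->
  (forall j, unit_pt (X j)) ->
  (forall j, X (S j) = next p q e (X j) \/ X (S j) = prev p q e (X j)) ->
  (forall j, X (S (S j)) <> X j) ->
  (forall j, X (S j) = next p q e (X j)) \/ (forall j, X (S j) = prev p q e (X j)).
Proof.
  intros adm U H Hne. destruct (H 0%nat) as [H0 | H0]; [left | right];
    intros j; induction j as [| j IH]; auto;
    destruct (H (S j)) as [h | h]; auto; exfalso; apply (Hne j).
  - rewrite h, IH, prev_next; auto.
  - rewrite h, IH, next_prev; auto.
Qed.

Lemma cis_surj X : unit_pt X -> exists t, cis t = X.
Proof.
  destruct X as [x y]. unfold unit_pt; cbn [fst snd]. intros U.
  assert (Hx : -1 <= x <= 1) by (split; nra).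
  destruct (Rle_lt_dec 0 y); [exists (acos x) | exists (- acos x)];
    unfold cis; rewrite ?cos_neg, ?sin_neg, cos_acos, sin_acos by exact Hx; f_equal.
  - replace (1 - x²) with (y ^ 2) by (unfold Rsqr; lra). apply sqrt_pow2. lra.
  - replace (1 - x²) with ((- y) ^ 2) by (unfold Rsqr; lra). rewrite sqrt_pow2 by lra. ring.
Qed.

Lemma dist2_cis a b : dist2 (cis a) (cis b) = 2 - 2 * cos (a - b).
Proof.
  rewrite cos_minus. pose proof (unit_pt_cis a) as Ua. pose proof (unit_pt_cis b) as Ub.
  unfold dist2, unit_pt, cis in *; cbn [fst snd] in *. lin_comb2 Ua 1 Ub 1.
Qed.

Lemma dist2_conj X Y : dist2 (conj_pt X) (conj_pt Y) = dist2 X Y.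
Proof. unfold dist2, conj_pt; cbn [fst snd]. ring. Qed.

Section PonceletPolygon.

Variables (O : pt) (r a b c s : R) (n : nat) (u : nat -> pt).
Hypotheses (Hr : 0 < r) (Ha : 0 < a) (Hb : 0 < b) (Hcs : c ^ 2 + s ^ 2 = 1).

Local Notation p := (r ^ 2 - a ^ 2 + b ^ 2).
Local Notation q := (r ^ 2 + a ^ 2 - b ^ 2).
Local Notation e := (a ^ 2 + b ^ 2 - r ^ 2).

Hypotheses (adm : admissible p q e) (Hu : poncelet_ngon O r O a b c s n u).

Definition vertex (j : nat) : pt := chart O r c s (u (j mod n)).

Lemma ngon_size_neq0 : n <> 0%nat.
Proof. destruct Hu as [Hn _]. lia. Qed.

Lemma on_circle_vertex j : on_circle O r (u (j mod n)).
Proof. apply (proj2 Hu). apply Nat.mod_upper_bound, ngon_size_neq0. Qed.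

Lemma vertex_unit j : unit_pt (vertex j).
Proof. unfold vertex. apply unit_pt_chart; auto using on_circle_vertex. Qed.

Lemma vertex_tangent j : chord_tangent p q e (vertex j) (vertex (S j)).
Proof.
  destruct (proj2 Hu (j mod n)) as (_ & T & _); [apply Nat.mod_upper_bound, ngon_size_neq0 |].
  rewrite Nat.Div0.add_mod_idemp_l, Nat.add_1_r in T.
  exact (chord_tangent_of_tangent_line O a b r c s _ _ Ha Hb Hr Hcs
           (on_circle_vertex j) (on_circle_vertex (S j)) T).
Qed.

Lemma vertex_no_backtrack j : vertex (S (S j)) <> vertex j.
Proof.
  intros H. apply chart_inj in H; auto.
  destruct (proj2 Hu (j mod n)) as (_ & _ & N); [apply Nat.mod_upper_bound, ngon_size_neq0 |].
  rewrite Nat.Div0.add_mod_idemp_l in N. replace (j + 2)%nat with (S (S j)) in N by lia. auto.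
Qed.

Lemma vertex_periodic : vertex n = vertex 0.
Proof. unfold vertex. rewrite Nat.Div0.mod_same, Nat.Div0.mod_0_l. reflexivity. Qed.

Lemma vertex_angles : exists t,
  cis (Nat.iter n (next_angle p q e) t) = cis t /\
  forall i j, dist2 (u (i mod n)) (u (j mod n))
              = r ^ 2 * dist2 (cis (Nat.iter i (next_angle p q e) t)) (cis (Nat.iter j (next_angle p q e) t)).
Proof.
  (* if the polygon turns clockwise, reflect it *)
  assert (HY : exists Y : nat -> pt, (forall j, Y (S j) = next p q e (Y j)) /\ unit_pt (Y 0%nat) /\
                 Y n = Y 0%nat /\ forall i j, dist2 (Y i) (Y j) = dist2 (vertex i) (vertex j)).
  { destruct (steps_all_next_or_all_prev p q e vertex adm vertex_unit
                (fun j => tangent_cases p q e adm _ _ (vertex_unit j) (vertex_unit (S j)) (vertex_tangent j))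
                vertex_no_backtrack) as [Hnext | Hprev].
    - exists vertex. auto using vertex_unit, vertex_periodic.
    - exists (fun j => conj_pt (vertex j)). repeat split.
      + intros j. rewrite Hprev, next_conj. reflexivity.
      + apply unit_pt_conj, vertex_unit.
      + rewrite vertex_periodic. reflexivity.
      + intros i j. apply dist2_conj. }
  destruct HY as (Y & HS & HU & HP & HD). destruct (cis_surj _ HU) as [t Ht].
  assert (HYt : forall j, Y j = cis (Nat.iter j (next_angle p q e) t)).
  { induction j as [| j IH]; [auto |]. rewrite HS, IH. symmetry. exact (cis_next_angle p q e adm _). }
  exists t. split.
  - rewrite <- HYt, HP. symmetry. exact Ht.
  - intros i j. rewrite (dist2_chart O r c s _ _ Hr Hcs), <- !HYt. f_equal. symmetry. apply HD.
Qed.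

Lemma diag_sum_as_cos_sum : exists t,
  cis (Nat.iter n (next_angle p q e) t) = cis t /\
  forall k, diag_sum n k u = r ^ 2 * (2 * INR n - 2 * diag_cos_sum p q e n k t).
Proof.
  destruct vertex_angles as (t & Hc & D). exists t. split; [exact Hc |]. intros k.
  change (diag_sum n k u) with (sum_upto n (fun i => dist2 (u ((i + k) mod n)) (u i))).
  transitivity (sum_upto n (fun j => r ^ 2 * 2 - r ^ 2 * 2 *
                  cos (Nat.iter (k + j) (next_angle p q e) t - Nat.iter j (next_angle p q e) t))).
  - apply sum_upto_ext. intros j Hj.
    rewrite <- (Nat.mod_small j n Hj) at 2. rewrite D, dist2_cis, (Nat.add_comm j k). ring.
  - unfold diag_cos_sum. rewrite sum_upto_minus, sum_upto_const, sum_upto_scal. ring.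
Qed.

End PonceletPolygon.

Theorem corollary6p3 :
  forall (O : pt) (r a b c s : R) (n : nat) (u v : nat -> pt),
    0 < r -> 0 < a -> 0 < b -> c ^ 2 + s ^ 2 = 1 ->
    (forall p : pt, on_ellipse O a b c s p -> dist2 p O < r ^ 2) ->
    poncelet_ngon O r O a b c s n u ->
    poncelet_ngon O r O a b c s n v ->
    forall k : nat, diag_sum n k u = diag_sum n k v.
Proof.
  intros O r a b c s n u v Hr Ha Hb Hcs Hin Pu Pv k.
  pose proof (admissible_of_inside O r a b c s Hr Ha Hb Hcs Hin) as adm.
  destruct (diag_sum_as_cos_sum O r a b c s n u Hr Ha Hb Hcs adm Pu) as (tu & Hcu & Du).
  destruct (diag_sum_as_cos_sum O r a b c s n v Hr Ha Hb Hcs adm Pv) as (tv & _ & Dv).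
  rewrite Du, Dv, (diag_cos_sum_const _ _ _ adm n k tu Hcu tu tv). reflexivity.
Qed.
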